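(* Let $\lambda$ and $\rho$ be two function quasi-norms over the same $\sigma$-finite measure space $(\Omega,\Sigma,\mu)$, and suppose $\rho$ has the weak Fatou property. Then $\rho$ dominates $\lambda$ if and only if $\{f\in L_0^+(\mu):\rho(f)<\infty\}\subseteq\{f\in L_0^+(\mu):\lambda(f)<\infty\}$.
   Context: $L_0^+(\mu)$: measurable functions $\Omega\to[0,\infty]$ modulo a.e. equality. A function quasi-norm is $\rho\colon L_0^+(\mu)\to[0,\infty]$ with (F1) $\rho(tf)=t\rho(f)$, $t\ge0$; (F2) $f\le g$ a.e. $\Rightarrow\rho(f)\le\rho(g)$; (F3) $\rho(\chi_E)<\infty$ if $\mu(E)<\infty$; (F4) for all $E$ with $\mu(E)<\infty$ and $\varepsilon>0$ there is $\delta>0$ with $\mu(A)\le\varepsilon$ whenever $A\subseteq E$ measurable and $\rho(\chi_A)\le\delta$; (F5) $\rho(f+g)\le\kappa(\rho(f)+\rho(g))$ for some constant $\kappa$. $\rho$ dominates $\lambda$ if there is $C$ with $\lambda(f)\le C\rho(f)$ for all $f\in L_0^+(\mu)$. $\rho$ has the weak Fatou property if $\rho(\lim_nf_n)<\infty$ for every non-decreasing $(f_n)$ in $L_0^+(\mu)$ with $\lim_n\rho(f_n)<\infty$. *)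

From HB Require Import structures.
From mathcomp Require Import all_boot all_order all_algebra.
From mathcomp Require Import all_classical all_reals all_analysis.
From mathcomp Require Import measurable_realfun.
Set Implicit Arguments. Unset Strict Implicit. Unset Printing Implicit Defensive.
Import Order.TTheory GRing.Theory Num.Theory.
Local Open Scope classical_set_scope.
Local Open Scope ring_scope.
Local Open Scope ereal_scope.

Section FQN.
Context (d : measure_display) (T : measurableType d) (R : realType)
  (mu : {measure set T -> \bar R}).

(* L_0^+(mu): measurable functions T -> [0, +oo] (a.e. classes are handled
   by quantifying over representatives; (F2) makes rho a.e.-invariant). *)
Definition L0p (f : T -> \bar R) : Prop :=
  measurable_fun [set: T] f /\ (forall x, 0 <= f x).

Definition chi (A : set T) : T -> \bar R := fun x => (\1_A x)%:E.

Definition function_quasi_norm (rho : (T -> \bar R) -> \bar R) : Prop :=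
  (forall f, L0p f -> 0 <= rho f) /\
  (forall (t : R) f, L0p f -> (0 <= t)%R ->
      rho (fun x => t%:E * f x) = t%:E * rho f) /\
  (* (F2) *)
  (forall f g, L0p f -> L0p g -> {ae mu, forall x, f x <= g x} ->
      rho f <= rho g) /\
  (forall E, measurable E -> mu E < +oo -> rho (chi E) < +oo) /\
  (forall E, measurable E -> mu E < +oo -> forall eps : R, (0 < eps)%R ->
      exists2 delta : R, (0 < delta)%R &
        forall A, measurable A -> A `<=` E -> rho (chi A) <= delta%:E ->
          mu A <= eps%:E) /\
  (exists kappa : R, forall f g, L0p f -> L0p g ->
      rho (f \+ g) <= kappa%:E * (rho f + rho g)).

Definition dominates (rho lambda : (T -> \bar R) -> \bar R) : Prop :=
  exists C : R, forall f, L0p f -> lambda f <= C%:E * rho f.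

Definition weak_Fatou (rho : (T -> \bar R) -> \bar R) : Prop :=
  forall f : nat -> T -> \bar R,
    (forall n, L0p (f n)) ->
    (forall n x, f n x <= f n.+1 x) ->
    limn (fun n => rho (f n)) < +oo ->
    rho (fun x => limn (fun n => f n x)) < +oo.

End FQN.

From HB Require Import structures.
From mathcomp Require Import all_boot all_order all_algebra.
From mathcomp Require Import all_classical all_reals all_analysis.
From mathcomp Require Import measurable_realfun.
Import Order.TTheory GRing.Theory Num.Theory.
Local Open Scope classical_set_scope.
Local Open Scope ring_scope.
Local Open Scope ereal_scope.

(* If rho does not dominate lambda, rescaling gives g_n with rho g_n <= r^n
   and lambda g_n = n, where r = 1/(2k) for a quasi-triangle constant k.
   The quasi-triangle inequality, applied from the right to the partial sums
   of sum_n g_n, bounds them by 2k uniformly, so by the weak Fatou property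
   G = sum_n g_n has rho G < oo; but lambda G >= lambda g_n = n for all n. *)

Section function_quasi_norm_facts.
Context {d : measure_display} {T : measurableType d} {R : realType}
  {mu : {measure set T -> \bar R}}.
Implicit Types (rho lambda : (T -> \bar R) -> \bar R) (f g : T -> \bar R).

Lemma L0p_cst0 : L0p (fun _ : T => 0 : \bar R).
Proof. by split=> //; exact: measurable_cst. Qed.

Lemma L0p_scale (t : R) f : (0 <= t)%R -> L0p f -> L0p (fun x => t%:E * f x).
Proof.
move=> t0 [mf f0]; split; first exact: measurable_funeM.
by move=> x; rewrite mule_ge0.
Qed.

Lemma L0p_sum {g : nat -> T -> \bar R} m n :
  (forall i, L0p (g i)) -> L0p (fun x => \sum_(m <= i < n) g i x).
Proof.
move=> Lg; split; first by apply: emeasurable_sum => i; case: (Lg i).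
by move=> x; apply: sume_ge0 => i _; case: (Lg i).
Qed.

Lemma L0p_nneseries {g : nat -> T -> \bar R} :
  (forall i, L0p (g i)) -> L0p (fun x => \sum_(i <oo) g i x).
Proof.
move=> Lg; split; last by move=> x; apply: nneseries_ge0 => i _ _; case: (Lg i).
by apply: ge0_emeasurable_sum => [i x _ _|i _]; case: (Lg i).
Qed.

Lemma nneseries_ge_term {g : nat -> T -> \bar R} n x :
  (forall i, L0p (g i)) -> g n x <= \sum_(i <oo) g i x.
Proof.
move=> Lg; have g0 i : 0 <= g i x by case: (Lg i).
apply: le_trans (nneseries_lim_ge n.+1 (fun i _ _ => g0 i)).
by rewrite big_nat_recr //= leeDr // sume_ge0.
Qed.

Lemma fqn_cst0 {rho} : function_quasi_norm mu rho -> rho (fun _ => 0) = 0.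
Proof.
move=> [_ [rF1 _]]; have := rF1 0%R _ L0p_cst0 (lexx _).
by change (0%R%:E) with (0 : \bar R); rewrite !mul0e.
Qed.

Lemma fqn_le {rho f g} : function_quasi_norm mu rho -> L0p f -> L0p g ->
  (forall x, f x <= g x) -> rho f <= rho g.
Proof. by move=> [_ [_ [rF2 _]]] Lf Lg fg; apply: rF2 => //; exact: aeW. Qed.

Lemma fqn_quasi_triangle {rho} : function_quasi_norm mu rho ->
  exists2 k : R, (0 < k)%R &
    forall f g, L0p f -> L0p g -> rho (f \+ g) <= k%:E * (rho f + rho g).
Proof.
move=> [r0 [_ [_ [_ [_ [kappa rF5]]]]]].
exists (Num.max kappa 1%R); first by rewrite lt_max ltr01 orbT.
move=> f g Lf Lg; apply: le_trans (rF5 f g Lf Lg) _.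
by rewrite lee_wpmul2r ?adde_ge0 ?r0 // lee_fin le_max lexx.
Qed.

Lemma dominates_finite {lambda rho} : function_quasi_norm mu rho ->
  dominates rho lambda -> forall f, L0p f -> rho f < +oo -> lambda f < +oo.
Proof.
move=> [r0 _] [C HC] f Lf rf; apply: le_lt_trans (HC f Lf) _.
have /fineK <- : rho f \is a fin_num by rewrite ge0_fin_numE ?r0.
by rewrite -EFinM ltry.
Qed.

(* Apply non-domination with the constant (b + 1) / a, then rescale. *)
Lemma not_dominates_witness {lambda rho} :
  function_quasi_norm mu lambda -> function_quasi_norm mu rho ->
  ~ dominates rho lambda ->
  (forall f, L0p f -> rho f < +oo -> lambda f < +oo) ->
  forall a b : R, (0 < a)%R -> (0 <= b)%R ->
  exists g, [/\ L0p g, rho g <= a%:E & lambda g = b%:E].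
Proof.
move=> [l0 [lF1 _]] [r0 [rF1 _]] ndom fin a b a0 b0.
have [f Lf ltf] : exists2 f, L0p f & ((b + 1) / a)%:E * rho f < lambda f.
  apply: contrapT => nf; apply: ndom; exists ((b + 1) / a)%R => f Lf.
  by rewrite leNgt; apply/negP => lt; apply: nf; exists f.
have /fineK rfE : rho f \is a fin_num.
  rewrite ge0_fin_numE ?r0 // ltey; apply/eqP => rf; move: ltf.
  by rewrite rf gt0_muley ?lte_fin ?divr_gt0 ?ltr_wpDl // ltNge leey.
have /fineK lfE : lambda f \is a fin_num.
  by rewrite ge0_fin_numE ?l0 // fin // -rfE ltry.
move: ltf; rewrite -rfE -lfE -EFinM lte_fin.
set u := fine (rho f); set v := fine (lambda f) => ltuv.
have u0 : (0 <= u)%R by rewrite -lee_fin rfE r0.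
have v0 : (0 < v)%R.
  by apply: le_lt_trans (ltuv); rewrite mulr_ge0 ?divr_ge0 ?addr_ge0 ?(ltW a0).
have t0 : (0 <= b / v)%R by rewrite divr_ge0 ?(ltW v0).
exists (fun x => (b / v)%:E * f x); split.
- exact: L0p_scale.
- rewrite rF1 // -rfE -EFinM lee_fin mulrAC ler_pdivrMr //.
  move: ltuv; rewrite mulrAC ltr_pdivrMr // => /ltW; rewrite [(a * v)%R]mulrC.
  by apply: le_trans; apply: ler_wpM2r => //; rewrite lerDl.
- by rewrite lF1 // -lfE -EFinM divfK // gt_eqF.
Qed.

Section geometric_series.
Context {rho : (T -> \bar R) -> \bar R} {k : R}.
Hypothesis rho_fqn : function_quasi_norm mu rho.
Hypothesis k_gt0 : (0 < k)%R.
Hypothesis rho_quasi_triangle : forall f g, L0p f -> L0p g ->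
  rho (f \+ g) <= k%:E * (rho f + rho g).
Context {g : nat -> T -> \bar R}.
Hypothesis g_L0p : forall n, L0p (g n).
Hypothesis rho_g : forall n, rho (g n) <= (((2 * k)^-1) ^+ n)%:E.

(* Peeling off the first term: k (r^m + 2k r^(m+1)) = 2k r^m since 2kr = 1. *)
Lemma rho_partial_sum_le m N :
  rho (fun x => \sum_(m <= i < m + N) g i x) <= (2 * k * (2 * k)^-1 ^+ m)%:E.
Proof.
elim: N m => [|N IH] m.
  under eq_fun do rewrite addn0 big_geq //.
  by rewrite fqn_cst0 // lee_fin mulr_ge0 ?exprn_ge0 ?invr_ge0 ?mulr_ge0 ?ltW.
rewrite addnS; under eq_fun do rewrite big_ltn ?ltnS ?leq_addr // -addSn.
apply: le_trans (rho_quasi_triangle _ _ (g_L0p m) (L0p_sum _ _ g_L0p)) _.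
apply: le_trans (lee_wpmul2l _ (leeD (rho_g m) (IH m.+1))) _.
  by rewrite lee_fin ltW.
have k2 : (2 * k != 0)%R by rewrite mulf_neq0 ?gt_eqF.
by rewrite -EFinD -EFinM exprS mulrA divff // mul1r -mulr2n mulrnAr -mulr_natl mulrA.
Qed.

Let partial_sum_nondecreasing x :
  nondecreasing_seq (fun n => \sum_(0 <= i < n) g i x).
Proof. by apply: ereal_nondecreasing_series => i _ _; case: (g_L0p i). Qed.

Lemma rho_nneseries_lt_pinfty :
  weak_Fatou rho -> rho (fun x => \sum_(i <oo) g i x) < +oo.
Proof.
move=> wF; apply: (wF (fun n x => \sum_(0 <= i < n) g i x)).
- by move=> n; exact: L0p_sum.
- by move=> n x; exact: partial_sum_nondecreasing.
apply: le_lt_trans (ltry (2 * k * (2 * k)^-1 ^+ 0)).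
apply: lime_le.
  apply: ereal_nondecreasing_is_cvgn => n m nm.
  apply: (fqn_le rho_fqn (L0p_sum _ _ g_L0p) (L0p_sum _ _ g_L0p)) => x.
  exact: partial_sum_nondecreasing.
by apply: nearW => N; have := rho_partial_sum_le 0 N; rewrite add0n.
Qed.

End geometric_series.

End function_quasi_norm_facts.

Theorem proposition3p16 (d : measure_display) (T : measurableType d)
  (R : realType) (mu : {measure set T -> \bar R})
  (lambda rho : (T -> \bar R) -> \bar R) :
  sigma_finite setT mu ->
  function_quasi_norm mu lambda ->
  function_quasi_norm mu rho ->
  weak_Fatou rho ->
  dominates rho lambda <->
  (forall f, L0p f -> rho f < +oo -> lambda f < +oo).
Proof.
move=> _ lfqn rfqn wF; split; first exact: dominates_finite rfqn.
move=> fin; apply: contrapT => ndom.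
have [k k0 tri] := fqn_quasi_triangle rfqn.
have /choice[g gP] n : exists g, [/\ L0p g,
    rho g <= ((2 * k)^-1 ^+ n)%:E & lambda g = (n%:R)%:E].
  apply: (not_dominates_witness lfqn rfqn ndom fin) => //.
  by rewrite exprn_gt0 // invr_gt0 mulr_gt0.
have Lg n : L0p (g n) by case: (gP n).
have rg n : rho (g n) <= ((2 * k)^-1 ^+ n)%:E by case: (gP n).
pose G : T -> \bar R := fun x => \sum_(i <oo) g i x.
have LG : L0p G := L0p_nneseries Lg.
have lG : lambda G = +oo.
  apply: eq_infty => c; apply: (@le_trans _ _ (lambda (g (Num.truncn c).+1))).
    by have [_ _ ->] := gP (Num.truncn c).+1; rewrite lee_fin ltW // truncnS_gt.
  exact: fqn_le lfqn (Lg _) LG (fun x => nneseries_ge_term _ x Lg).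
have := fin G LG (rho_nneseries_lt_pinfty rfqn k0 tri Lg rg wF).
by rewrite lG ltxx.
Qed.
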